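(* Let $G_{\max}=(V,E_{\max})$ be a finite, simple, connected, undirected graph, and let $\lambda',\mu',\gamma'>0$ with $\frac{\lambda'}{\mu'}>1$ and $0<\gamma'\le 1$ (Regime III). For a network state $\mathbf{A}$ (a subset $E(\mathbf{A})\subseteq E_{\max}$ of closed edges) let $g(E(\mathbf{A}))$ be the number of $C_3$ subgraphs (triangles) plus the number of $P_4$ subgraphs (paths with 4 vertices) formed by $E(\mathbf{A})$, and call a maximizer of $\pi(\mathbf{A})\propto(\lambda'/\mu')^{|E(\mathbf{A})|}\gamma'^{\,g(E(\mathbf{A}))}$ over all network states a most-probable network (for POD-DBP). If $\lambda'\gamma'<\mu'$, then the most-probable networks are exactly the network states $\mathbf{A}^*$ with $g(E(\mathbf{A}^* ))=0$ and $|E(\mathbf{A}^* )|$ maximum among such states; equivalently, $E(\mathbf{A}^* )$ is a maximum star matching of $G_{\max}$.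
   Context: A star graph is a graph consisting of a center vertex joined to all other vertices, with no other edges. A star matching of a graph $G=(V,E)$ is a subset of $E$ whose edges form a collection of vertex-disjoint (disconnected) star graphs; a maximum star matching is a star matching with the largest possible number of edges. *)

From HB Require Import structures.
From mathcomp Require Import all_boot all_order all_algebra.
Set Implicit Arguments. Unset Strict Implicit. Unset Printing Implicit Defensive.
Import Order.TTheory GRing.Theory Num.Theory.

Section Graphs.
Variable T : finType.
Implicit Types E S A B : {set {set T}}.

(* A simple graph on vertex set T is given by its edge set: a set of
   2-element subsets of T. *)
Definition simple_edges E : bool := [forall e in E, #|e| == 2].

Definition adj E : rel T := fun x y => [set x; y] \in E.

Definition connected_graph E : Prop := forall x y : T, connect (adj E) x y.

Definition is_C3 S : bool :=
  [exists a : T, exists b : T, exists c : T,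
     [&& a != b, b != c, a != c &
         S == [set [set a; b]; [set b; c]; [set a; c]]]].

Definition is_P4 S : bool :=
  [exists a : T, exists b : T, exists c : T, exists d : T,
     [&& [&& a != b, a != c, a != d, b != c, b != d & c != d] &
         S == [set [set a; b]; [set b; c]; [set c; d]]]].

Definition g E : nat :=
  #|[set S : {set {set T}} | (S \subset E) && is_C3 S]| +
  #|[set S : {set {set T}} | (S \subset E) && is_P4 S]|.

Definition verts S : {set T} := \bigcup_(e in S) e.

Definition is_star S : bool :=
  (S != set0) && [exists c : T, [forall e in S, c \in e]].

Definition star_matching A : Prop :=
  exists P : {set {set {set T}}},
    [/\ partition P A,
        (forall S : {set {set T}}, S \in P -> is_star S) &
        (forall S1 S2 : {set {set T}}, S1 \in P -> S2 \in P -> S1 != S2 ->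
            [disjoint verts S1 & verts S2])].

Definition max_star_matching (Emax A : {set {set T}}) : Prop :=
  [/\ A \subset Emax, star_matching A &
      forall B : {set {set T}}, B \subset Emax -> star_matching B -> #|B| <= #|A|].

Definition weight (R : realFieldType) (lam mu gam : R) E : R :=
  ((lam / mu) ^+ #|E| * gam ^+ g E)%R.

Definition most_probable (R : realFieldType) (lam mu gam : R) (Emax A : {set {set T}}) : Prop :=
  A \subset Emax /\
  forall B : {set {set T}}, B \subset Emax -> (weight lam mu gam B <= weight lam mu gam A)%R.

End Graphs.

(* Since [lam / mu * gam < 1], deleting one edge of a triangle or of a P4
   strictly increases the weight: the factor [lam / mu] that is lost is
   outweighed by at least one factor [gam] that is regained.  Hence a
   most-probable network has [g = 0], and on such states the weight
   [(lam / mu) ^ |E|] grows with [|E|].  A simple edge set with [g = 0] is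
   exactly a star matching: P4-freeness makes "sharing a vertex" an
   equivalence relation on the edges, whose classes are stars by C3-freeness;
   conversely, edges of a star matching that share a vertex lie in the same
   star, so three of them forming a triangle or a P4 would have a common
   vertex. *)
From HB Require Import structures.
From mathcomp Require Import all_boot all_order all_algebra zify.
Import Order.TTheory GRing.Theory Num.Theory.

Set Implicit Arguments.
Unset Strict Implicit.
Unset Printing Implicit Defensive.

Section SubgraphCounts.
Variable T : finType.
Implicit Types (E S : {set {set T}}) (P : pred {set {set T}}).

Definition nsub P E : nat := #|[set S : {set {set T}} | (S \subset E) && P S]|.

Lemma g_nsub E : g E = nsub (@is_C3 T) E + nsub (@is_P4 T) E.
Proof. by []. Qed.

Lemma nsubS P E1 E2 : E1 \subset E2 -> nsub P E1 <= nsub P E2.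
Proof.
move=> sE12; apply/subset_leq_card/subsetP => S; rewrite !inE.
by case/andP=> sSE1 ->; rewrite (subset_trans sSE1 sE12).
Qed.

Lemma nsub_gt0 P E S : S \subset E -> P S -> 0 < nsub P E.
Proof. by move=> sSE PS; apply/card_gt0P; exists S; rewrite inE sSE. Qed.

Lemma nsub_eq0 P E : (forall S, S \subset E -> ~~ P S) -> nsub P E = 0.
Proof.
move=> noP; apply/eqP; rewrite cards_eq0; apply/eqP/setP => S.
by rewrite !inE; case: (boolP (S \subset E)) => // /noP/negbTE.
Qed.

Lemma nsubD1_lt P E S e : S \subset E -> P S -> e \in S ->
  nsub P (E :\ e) < nsub P E.
Proof.
move=> sSE PS eS; apply/proper_card/properP; split.
  apply/subsetP => X; rewrite !inE => /andP[sXE ->].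
  by rewrite (subset_trans sXE) ?subD1set.
exists S; first by rewrite inE sSE.
by rewrite inE subsetD1 eS andbF.
Qed.

Lemma nsub_drop_lt P E : (forall S, P S -> S != set0) -> 0 < nsub P E ->
  exists2 e, e \in E & nsub P (E :\ e) < nsub P E.
Proof.
move=> P_neq0 /card_gt0P[S]; rewrite inE => /andP[sSE PS].
have /set0Pn[e eS] := P_neq0 S PS.
by exists e; [exact: subsetP sSE e eS | exact: nsubD1_lt sSE PS eS].
Qed.

Lemma C3_neq0 S : is_C3 S -> S != set0.
Proof.
case/existsP=> a /existsP[b /existsP[c /and4P[_ _ _ /eqP->]]].
by apply/set0Pn; exists [set a; b]; rewrite !inE eqxx.
Qed.

Lemma P4_neq0 S : is_P4 S -> S != set0.
Proof.
case/existsP=> a /existsP[b /existsP[c /existsP[d /andP[_ /eqP->]]]].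
by apply/set0Pn; exists [set a; b]; rewrite !inE eqxx.
Qed.

Lemma g_drop_lt E : 0 < g E -> exists2 e, e \in E & g (E :\ e) < g E.
Proof.
have leD1 P e : nsub P (E :\ e) <= nsub P E by apply/nsubS/subD1set.
rewrite g_nsub; case: (posnP (nsub (@is_C3 T) E)) => [C3E0|].
  rewrite C3E0 add0n => /(nsub_drop_lt (@P4_neq0))[e eE lt].
  by exists e; rewrite // !g_nsub; have := leD1 (@is_C3 T) e; lia.
move=> /(nsub_drop_lt (@C3_neq0))[e eE lt] _.
by exists e; rewrite // !g_nsub; have := leD1 (@is_P4 T) e; lia.
Qed.

Lemma C3_g_gt0 E a b c : a != b -> b != c -> a != c ->
  [set a; b] \in E -> [set b; c] \in E -> [set a; c] \in E -> 0 < g E.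
Proof.
move=> ab bc ac abE bcE acE; rewrite g_nsub ltn_addr //.
apply: (@nsub_gt0 _ _ [set [set a; b]; [set b; c]; [set a; c]]).
  by apply/subsetP => e; rewrite !inE => /orP[/orP[]|]/eqP->.
apply/existsP; exists a; apply/existsP; exists b; apply/existsP; exists c.
by rewrite ab bc ac eqxx.
Qed.

Lemma P4_g_gt0 E a b c d :
  [&& a != b, a != c, a != d, b != c, b != d & c != d] ->
  [set a; b] \in E -> [set b; c] \in E -> [set c; d] \in E -> 0 < g E.
Proof.
move=> distinct abE bcE cdE; rewrite g_nsub ltn_addl //.
apply: (@nsub_gt0 _ _ [set [set a; b]; [set b; c]; [set c; d]]).
  by apply/subsetP => e; rewrite !inE => /orP[/orP[]|]/eqP->.
apply/existsP; exists a; apply/existsP; exists b; apply/existsP; exists c.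
by apply/existsP; exists d; rewrite distinct eqxx.
Qed.

End SubgraphCounts.

Section StarMatchings.
Variable T : finType.
Implicit Types (e f h : {set T}) (A B S : {set {set T}}).

Definition meets e f : bool := e :&: f != set0.

Lemma meetsC e f : meets e f = meets f e.
Proof. by rewrite /meets setIC. Qed.

Lemma meets_set2 x y z : meets [set x; y] [set y; z].
Proof. by apply/set0Pn; exists y; rewrite !inE eqxx orbT. Qed.

Lemma card2_set2 e x : #|e| = 2 -> x \in e ->
  exists2 y, y != x & e = [set x; y].
Proof.
move/eqP/cards2P => [u [v [uv ->]]]; rewrite !inE => /orP[]/eqP->.
  by exists v; rewrite // eq_sym.
by exists u; rewrite // setUC.
Qed.

Lemma card2_eq_set2 e x y : #|e| = 2 -> x \in e -> y \in e -> x != y ->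
  e = [set x; y].
Proof.
move=> e2 xe ye xy; apply/eqP; rewrite eq_sym eqEcard cards2 xy e2 andbT.
by apply/subsetP => z; rewrite !inE => /orP[]/eqP->.
Qed.

Lemma simple_edgesS A B : A \subset B -> simple_edges B -> simple_edges A.
Proof.
by move=> sAB /forall_inP B2; apply/forall_inP => e eA; apply/B2/(subsetP sAB).
Qed.

Lemma star_matching_center A e1 e2 e3 : star_matching A ->
  e1 \in A -> e2 \in A -> e3 \in A -> meets e1 e2 -> meets e2 e3 ->
  exists z, [/\ z \in e1, z \in e2 & z \in e3].
Proof.
case=> P [/and3P[/eqP coverP _ _] P_star P_disj] e1A e2A e3A.
have same_block e f :
    e \in A -> f \in A -> meets e f -> pblock P e = pblock P f.
  move=> eA fA /set0Pn[v]; rewrite inE => /andP[ve vf].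
  rewrite -!coverP in eA fA; apply/eqP; apply: contraTT isT => neq.
  have v_verts h : h \in cover P -> v \in h -> v \in verts (pblock P h).
    by move=> hP vh; apply/bigcupP; exists h; rewrite ?mem_pblock.
  have P_ef := P_disj _ _ (pblock_mem eA) (pblock_mem fA) neq.
  by have := v_verts f fA vf; rewrite (disjointFr P_ef (v_verts e eA ve)).
move=> m12 m23; have e1P : e1 \in cover P by rewrite coverP.
have /andP[_ /existsP[z /forall_inP z_center]] := P_star _ (pblock_mem e1P).
have in_block e : e \in A -> pblock P e = pblock P e1 -> z \in e.
  by move=> eA eq; apply: z_center; rewrite -eq mem_pblock coverP.
have b12 := same_block _ _ e1A e2A m12.
have b23 := same_block _ _ e2A e3A m23.
by exists z; rewrite !in_block // -?b23 b12.
Qed.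

Lemma star_matching_noC3 A S : star_matching A -> S \subset A -> ~~ is_C3 S.
Proof.
move=> smA sSA; apply/negP.
case/existsP=> a /existsP[b /existsP[c /and4P[/eqP ab /eqP bc /eqP ac]]].
move/eqP=> SE.
have inA e : e \in S -> e \in A by apply: (subsetP sSA).
have [abA bcA acA] : [/\ [set a; b] \in A, [set b; c] \in A & [set a; c] \in A].
  by split; apply: inA; rewrite SE !inE eqxx ?orbT.
have bc_ac : meets [set b; c] [set a; c].
  by rewrite [[set a; c]]setUC meets_set2.
have [z [za zb zc]] :=
  star_matching_center smA abA bcA acA (meets_set2 a b c) bc_ac.
move: za zb zc; rewrite !inE => /orP[]/eqP za /orP[]/eqP zb /orP[]/eqP zc;
  congruence.
Qed.

Lemma star_matching_noP4 A S : star_matching A -> S \subset A -> ~~ is_P4 S.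
Proof.
move=> smA sSA; apply/negP.
case/existsP=> a /existsP[b /existsP[c /existsP[d /andP[distinct /eqP SE]]]].
have inA e : e \in S -> e \in A by apply: (subsetP sSA).
have [abA bcA cdA] : [/\ [set a; b] \in A, [set b; c] \in A & [set c; d] \in A].
  by split; apply: inA; rewrite SE !inE eqxx ?orbT.
have [z [za _ zd]] := star_matching_center smA abA bcA cdA
  (meets_set2 a b c) (meets_set2 b c d).
case/and5P: distinct => _ /eqP ac /eqP ad /eqP bc /andP[/eqP bd _].
by move: za zd; rewrite !inE => /orP[]/eqP za /orP[]/eqP zd; congruence.
Qed.

Lemma star_matching_g0 A : star_matching A -> g A = 0.
Proof.
move=> smA; rewrite g_nsub !nsub_eq0 // => S sSA.
- exact: (star_matching_noP4 smA sSA).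
- exact: (star_matching_noC3 smA sSA).
Qed.

Section GFreeEdgeSets.
Variable B : {set {set T}}.
Hypotheses (B_simple : simple_edges B) (B_g0 : g B = 0).

Let card2 e : e \in B -> #|e| = 2.
Proof. by move=> eB; apply/eqP; move/forall_inP: B_simple; apply. Qed.

Lemma meets_refl e : e \in B -> meets e e.
Proof. by move=> eB; rewrite /meets setIid -card_gt0 card2. Qed.

Lemma meets_trans e1 e2 e3 : e1 \in B -> e2 \in B -> e3 \in B ->
  meets e1 e2 -> meets e2 e3 -> meets e1 e3.
Proof.
move=> e1B e2B e3B /set0Pn[x]; rewrite inE => /andP[x1 x2].
move=> /set0Pn[y]; rewrite inE => /andP[y2 y3].
have [exy|xy] := eqVneq x y.
  by apply/set0Pn; exists x; rewrite inE x1 exy.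
have [x3|nx3] := boolP (x \in e3).
  by apply/set0Pn; exists x; rewrite inE x1.
have [a ax E1] := card2_set2 (card2 e1B) x1.
have [a3|na3] := boolP (a \in e3).
  by apply/set0Pn; exists a; rewrite inE a3 E1 !inE eqxx orbT.
have [d dy E3] := card2_set2 (card2 e3B) y3.
have E2 := card2_eq_set2 (card2 e2B) x2 y2 xy.
have ay : a != y by apply: contraNneq na3 => ->.
have ad : a != d by apply: contraNneq na3 => ->; rewrite E3 !inE eqxx orbT.
have xd : x != d by apply: contraNneq nx3 => ->; rewrite E3 !inE eqxx orbT.
suff : 0 < g B by rewrite B_g0.
apply: (@P4_g_gt0 _ B a x y d); rewrite -?E2 -?E3 ?[[set a; x]]setUC -?E1 //.
by rewrite ax ay ad xy xd eq_sym dy.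
Qed.

Lemma meets_equiv : {in B & &, equivalence_rel meets}.
Proof.
move=> e f h eB fB hB; split=> [|ef]; first exact: meets_refl.
apply/idP/idP=> [eh|fh]; last exact: meets_trans eB fB hB ef fh.
by apply: meets_trans fB eB hB _ eh; rewrite meetsC.
Qed.

Definition meets_class e : {set {set T}} := [set f in B | meets e f].

Lemma meets_class_center e : e \in B ->
  exists c, forall f, f \in meets_class e -> c \in f.
Proof.
move=> eB; have /eqP/cards2P[a [b [ab Ee]]] := card2 eB.
have [a_center|] := boolP [forall f in meets_class e, a \in f].
  by exists a; apply/forall_inP.
case/forall_inPn=> f; rewrite inE => /andP[fB ef] af.
exists b => h; rewrite inE => /andP[hB eh]; apply: contraT => bh.
have bf : b \in f.
  case/set0Pn: ef => z; rewrite inE Ee !inE => /andP[/orP[]/eqP-> //].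
  by rewrite (negbTE af).
have ah : a \in h.
  case/set0Pn: eh => z; rewrite inE Ee !inE => /andP[/orP[]/eqP-> //].
  by rewrite (negbTE bh).
have [c cb Ef] := card2_set2 (card2 fB) bf.
have ac : a != c by apply: contraNneq af => ->; rewrite Ef !inE eqxx orbT.
have ch : c \in h.
  have /set0Pn[z] : meets h f.
    by apply: meets_trans hB eB fB _ ef; rewrite meetsC.
  rewrite inE Ef !inE => /andP[zh /orP[]/eqP ez]; last by rewrite -ez.
  by move: zh; rewrite ez (negbTE bh).
have Eh := card2_eq_set2 (card2 hB) ah ch ac.
suff : 0 < g B by rewrite B_g0.
by apply: (@C3_g_gt0 _ B a b c); rewrite -?Ee -?Ef -?Eh // eq_sym.
Qed.

Lemma g0_star_matching : star_matching B.
Proof.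
exists (equivalence_partition meets B); split.
- exact: equivalence_partitionP meets_equiv.
- move=> S /imsetP[e eB ->]; apply/andP; split.
    by apply/set0Pn; exists e; rewrite inE eB meets_refl.
  have [c c_center] := meets_class_center eB.
  by apply/existsP; exists c; apply/forall_inP.
- move=> S1 S2 /imsetP[e1 e1B ->] /imsetP[e2 e2B ->]; apply: contraNT.
  case/pred0Pn=> v /andP[/bigcupP[f]]; rewrite inE => /andP[fB e1f] vf.
  case/bigcupP=> h; rewrite inE => /andP[hB e2h] vh.
  have fh : meets f h by apply/set0Pn; exists v; rewrite inE vf.
  have e1e2 : meets e1 e2.
    apply: (meets_trans e1B fB e2B e1f); apply: (meets_trans fB hB e2B fh).
    by rewrite meetsC.
  apply/eqP/setP => k; rewrite !inE; case: (boolP (k \in B)) => //= kB.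
  by have [_ ->] := meets_equiv e1B e2B kB.
Qed.

End GFreeEdgeSets.

Lemma g_eq0_star_matching B : simple_edges B -> g B = 0 <-> star_matching B.
Proof.
by move=> B_simple; split=> [/(g0_star_matching B_simple) | /star_matching_g0].
Qed.

Definition max_g0 (Emax A : {set {set T}}) : Prop :=
  g A = 0 /\ forall B, B \subset Emax -> g B = 0 -> #|B| <= #|A|.

Lemma max_g0_star_matching Emax A : simple_edges Emax -> A \subset Emax ->
  max_g0 Emax A <-> max_star_matching Emax A.
Proof.
move=> Emax_simple sAE.
have g0_sm B : B \subset Emax -> g B = 0 <-> star_matching B.
  by move=> sBE; apply/g_eq0_star_matching/(simple_edgesS sBE).
split=> [[/(g0_sm _ sAE) smA A_max] | [_ /(g0_sm _ sAE) gA A_max]].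
  by split=> // B sBE /(g0_sm _ sBE); apply: A_max.
by split=> // B sBE /(g0_sm _ sBE); apply: A_max.
Qed.

End StarMatchings.

Section Weight.
Variables (R : realFieldType) (T : finType) (lam mu gam : R).
Hypotheses (r_gt1 : (1 < lam / mu)%R) (gam_gt0 : (0 < gam)%R)
  (gam_le1 : (gam <= 1)%R) (rgam_lt1 : (lam / mu * gam < 1)%R).
Implicit Types E Emax A B : {set {set T}}.

Local Notation weight := (weight lam mu gam).

Lemma weight_g0 E : g E = 0 -> weight E = ((lam / mu) ^+ #|E|)%R.
Proof. by move=> gE0; rewrite /weight gE0 expr0 mulr1. Qed.

Lemma weight_D1_lt E e : e \in E -> g (E :\ e) < g E ->
  (weight E < weight (E :\ e))%R.
Proof.
move=> eE lt_g; rewrite /weight (cardsD1 e E) eE add1n exprS.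
set r := (lam / mu)%R; set m := #|E :\ e|; set k := g (E :\ e).
have r_gt0 : (0 < r)%R by apply: lt_trans r_gt1.
have -> : g E = (k + (g E - k))%N by rewrite subnKC // ltnW.
rewrite exprD (mulrC r) mulrACA gtr_pMr ?mulr_gt0 ?exprn_gt0 //.
apply: le_lt_trans rgam_lt1; rewrite ler_pM2l // ler_iXnr // ?ltW //.
by rewrite subn_gt0.
Qed.

Lemma exists_g0_subset_heavier E : exists2 E' : {set {set T}}, E' \subset E &
  [/\ g E' = 0, (weight E <= weight E')%R
     & (0 < g E -> (weight E < weight E')%R)].
Proof.
have [n] := ubnP #|E|; elim: n E => // n IH E ltEn.
have [gE0|gE_gt0] := posnP (g E); first by exists E; rewrite ?gE0.
have [e eE lt_g] := g_drop_lt gE_gt0.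
have ltE'n : #|E :\ e| < n by move: ltEn; rewrite (cardsD1 e E) eE.
have [E' sE'E [gE'0 le_w _]] := IH _ ltE'n.
have lt_w := lt_le_trans (weight_D1_lt eE lt_g) le_w.
by exists E'; [apply: subset_trans sE'E (subD1set E e) | split; rewrite ?ltW].
Qed.

Lemma most_probable_max_g0 Emax A : A \subset Emax ->
  most_probable lam mu gam Emax A <-> max_g0 Emax A.
Proof.
move=> sAE; split=> [[_ A_max] | [gA0 A_max]].
  have gA0 : g A = 0.
    apply/eqP; apply: contraT; rewrite -lt0n => gA_gt0.
    have [E' sE'A [_ _ /(_ gA_gt0)]] := exists_g0_subset_heavier A.
    by rewrite ltNge A_max // (subset_trans sE'A).
  split=> // B sBE gB0.
  by have := A_max B sBE; rewrite !weight_g0 // ler_eXn2l.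
split=> // B sBE; have [E' sE'B [gE'0 le_w _]] := exists_g0_subset_heavier B.
apply: le_trans le_w _; rewrite !weight_g0 // ler_eXn2l //.
exact: A_max (subset_trans sE'B sBE) gE'0.
Qed.

End Weight.

Theorem theorem8 (R : realFieldType) (T : finType) (Emax : {set {set T}})
    (lam mu gam : R) :
  simple_edges Emax -> connected_graph Emax ->
  (0 < lam)%R -> (0 < mu)%R -> (0 < gam)%R ->
  (1 < lam / mu)%R -> (gam <= 1)%R ->
  (lam * gam < mu)%R ->
  forall A : {set {set T}}, A \subset Emax ->
    (most_probable lam mu gam Emax A <->
       (g A = 0%N /\
        forall B : {set {set T}}, B \subset Emax -> g B = 0%N -> #|B| <= #|A|))
    /\
    ((g A = 0%N /\
        forall B : {set {set T}}, B \subset Emax -> g B = 0%N -> #|B| <= #|A|)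
       <-> max_star_matching Emax A).
Proof.
move=> Emax_simple _ _ mu_gt0 gam_gt0 r_gt1 gam_le1 lamgam_lt A sAE.
have rgam_lt1 : (lam / mu * gam < 1)%R by rewrite mulrAC ltr_pdivrMr // mul1r.
split; first exact: most_probable_max_g0.
exact: max_g0_star_matching.
Qed.
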